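(* Assume CH. There exists a Sierpiński set $S\subseteq\mathbb{R}$ such that $S+S=\{a+b:a,b\in S\}$ is a Bernstein set.
   Context: A Sierpiński set is $S\subseteq\mathbb{R}$ with $|S|=\mathfrak{c}$ such that $S\cap N$ is countable for every Lebesgue-null $N\subseteq\mathbb{R}$. A set $B\subseteq\mathbb{R}$ is a Bernstein set if for every nonempty perfect set $P\subseteq\mathbb{R}$ both $B\cap P\neq\emptyset$ and $(\mathbb{R}\setminus B)\cap P\neq\emptyset$. *)

From Stdlib Require Import Reals.
Open Scope R_scope.

Definition countable (A : R -> Prop) : Prop :=
  exists f : R -> nat, forall x y, A x -> A y -> f x = f y -> x = y.

Definition has_card_continuum (A : R -> Prop) : Prop :=
  exists f : R -> R,
    (forall x, A (f x)) /\
    (forall x y, f x = f y -> x = y) /\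
    (forall y, A y -> exists x, f x = y).

Definition CH : Prop :=
  forall A : R -> Prop, countable A \/ has_card_continuum A.

Definition lebesgue_null (N : R -> Prop) : Prop :=
  forall eps : R, 0 < eps ->
    exists a b : nat -> R,
      (forall n, a n <= b n) /\
      (forall x, N x -> exists n, a n < x < b n) /\
      (forall m, sum_f_R0 (fun n => b n - a n) m <= eps).

Definition sierpinski_set (S : R -> Prop) : Prop :=
  has_card_continuum S /\
  forall N : R -> Prop, lebesgue_null N -> countable (fun x => S x /\ N x).

Definition closed_set (P : R -> Prop) : Prop :=
  forall x, (forall e, 0 < e -> exists y, P y /\ Rabs (y - x) < e) -> P x.

Definition perfect_set (P : R -> Prop) : Prop :=
  closed_set P /\
  forall x, P x -> forall e, 0 < e -> exists y, P y /\ y <> x /\ Rabs (y - x) < e.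

Definition bernstein_set (B : R -> Prop) : Prop :=
  forall P : R -> Prop, perfect_set P -> (exists x, P x) ->
    (exists x, P x /\ B x) /\ (exists x, P x /\ ~ B x).

Definition sumset (S : R -> Prop) : R -> Prop :=
  fun z => exists a b, S a /\ S b /\ z = a + b.

(* Under CH, fix a well-order of R all of whose initial segments are countable, and
   code every null set (by interval covers) and every closed set (by its complementary
   rational intervals) by a real, so that each such set is handled at some stage r.
   By recursion along the well-order choose x_r, y_r, q_r so that x_r and y_r avoid
   the null sets of all stages <= r, while x_r + y_r and q_r lie in the r-th perfect
   set and q_r is never a sum of two chosen points.  A perfect set is uncountable,
   which gives q_r and x_r + y_r; x_r is found outside the union of countably many
   null sets and a countable set of forbidden values, which is still null.
   S = {x_r, y_r} then meets a null set only in points from the countably many earlier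
   stages, is uncountable since countable sets are null, and S + S meets each perfect
   set (in x_r + y_r) and its complement (in q_r). *)

From Stdlib Require Import Reals Lra Lia ZArith Classical ClassicalEpsilon.
From Stdlib Require Import FunctionalExtensionality PropExtensionality Inverse_Image.
From Stdlib Require Cantor.
From mathcomp Require all_boot all_order all_algebra all_classical all_reals.
From mathcomp Require all_analysis Rstruct wochoice.

Open Scope R_scope.

Lemma exists_inv_INR_lt (e : R) : 0 < e -> exists m : nat, / INR (S m) < e.
Proof.
  intros he. destruct (archimed (/ e)) as [h1 _].
  assert (0 < / e) by (apply Rinv_0_lt_compat; auto).
  exists (Z.to_nat (up (/ e))).
  rewrite S_INR, INR_IZR_INZ, Z2Nat.id.
  - rewrite <- (Rinv_inv e) at 2. apply Rinv_lt_contravar.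
    + apply Rmult_lt_0_compat; lra.
    + lra.
  - apply le_IZR. lra.
Qed.

Module Negligible.
Import all_boot all_order all_algebra all_classical all_reals all_analysis.
Import Rstruct.
Import Order.TTheory GRing.Theory Num.Theory.
Local Open Scope classical_set_scope.

Definition lebesgue_negligible (N : R -> Prop) : Prop :=
  (@lebesgue_measure R).-negligible N.

Lemma big_nat_sum_f_R0 (f : nat -> R) (m : nat) :
  (\sum_(0 <= k < m.+1) f k)%R = sum_f_R0 f m.
Proof.
elim: m => [|m IH]; first by rewrite big_nat1.
by rewrite big_nat_recr //= IH RplusE.
Qed.

Lemma nneseries_le_partial_bound (f : nat -> R) (e : R) :
  (forall n, (0 <= f n)%R) -> (forall m, (sum_f_R0 f m <= e)%coqR) ->
  (\sum_(0 <= n <oo) (f n)%:E <= e%:E)%E.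
Proof.
move=> f0 fe.
apply: lime_le; first by apply: is_cvg_nneseries => n _; rewrite lee_fin.
apply: nearW => -[|m]; rewrite sumEFin lee_fin; last first.
  by rewrite big_nat_sum_f_R0; apply/RleP.
by rewrite big_geq //; apply: le_trans (f0 0%N) _; apply/RleP; apply: fe 0%N.
Qed.

Lemma lebesgue_measure_itv_oo_le (a b : R) : (a <= b)%R ->
  (lebesgue_measure (`]a, b[%classic : set R) <= (b - a)%:E)%E.
Proof.
move=> ab; rewrite lebesgue_measure_itv /= lte_fin.
by case: ifP => _; rewrite ?EFinB // lee_fin subr_ge0.
Qed.

Lemma lebesgue_measure_bigcup_itv_oo_le (a b : nat -> R) (e : R) :
  (forall n, (a n <= b n)%coqR) ->
  (forall m, (sum_f_R0 (fun n => b n - a n) m <= e)%coqR) ->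
  (lebesgue_measure (\bigcup_n `]a n, b n[%classic) <= e%:E)%E.
Proof.
move=> ab se.
have ab' n : (a n <= b n)%R by apply/RleP.
apply: (le_trans (@measure_sigma_subadditive _ _ _ (@lebesgue_measure R) _
  (fun n => `]a n, b n[%classic) (fun n => measurable_itv _)
  (bigcupT_measurable _ (fun n => measurable_itv _)) (@subset_refl _ _))).
apply: (le_trans (lee_nneseries (v := fun n => (b n - a n)%:E) _ _)).
- by move=> i _ _; apply: measure_ge0.
- by move=> n _; apply: lebesgue_measure_itv_oo_le.
by apply: nneseries_le_partial_bound => // n; rewrite subr_ge0.
Qed.

Lemma lebesgue_null_negligible (N : R -> Prop) :
  lebesgue_null N -> lebesgue_negligible N.
Proof.
move=> hN.
have hk k : exists ab : (nat -> R) * (nat -> R),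
   (forall n, (ab.1 n <= ab.2 n)%coqR) /\
   (forall x, N x -> exists n, (ab.1 n < x < ab.2 n)%coqR) /\
   (forall m, (sum_f_R0 (fun n => ab.2 n - ab.1 n) m <= / INR k.+1)%coqR).
  have [|a [b h]] := hN (/ INR k.+1)%coqR; last by exists (a, b).
  by apply: Rinv_0_lt_compat; apply: lt_0_INR; apply/ssrnat.ltP.
have [ab hab] := choice hk.
pose cover k := \bigcup_n (`](ab k).1 n, (ab k).2 n[%classic : set R).
exists (\bigcap_k cover k); split.
- by apply: bigcapT_measurable => k; apply: bigcupT_measurable => n;
    apply: measurable_itv.
- apply/eqP; rewrite eq_le measure_ge0 andbT.
  apply/lee_addgt0Pr => e /RltP e0; rewrite add0e.
  have [k ke] := exists_inv_INR_lt e e0.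
  apply: (@le_trans _ _ (lebesgue_measure (cover k))).
    apply: le_measure; last exact: bigcap_inf.
      rewrite inE; apply: bigcapT_measurable => k'.
      by apply: bigcupT_measurable => n; apply: measurable_itv.
    by rewrite inE; apply: bigcupT_measurable => n; apply: measurable_itv.
  apply: (le_trans (lebesgue_measure_bigcup_itv_oo_le _ _ _ (proj1 (hab k))
    (proj2 (proj2 (hab k))))).
  by rewrite lee_fin; apply/RleP; apply: Rlt_le.
- move=> x Nx k _; have [n hn] := proj1 (proj2 (hab k)) x Nx.
  by exists n => //=; rewrite in_itv /=; apply/andP; split; apply/RltP; case: hn.
Qed.

Lemma negligible_subset (N M : R -> Prop) :
  (forall x, N x -> M x) -> lebesgue_negligible M -> lebesgue_negligible N.
Proof. by move=> h; apply: negligibleS. Qed.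

Lemma negligible_empty : lebesgue_negligible (fun _ => False).
Proof. exact: negligible_set0. Qed.

Lemma negligible_union (N M : R -> Prop) :
  lebesgue_negligible N -> lebesgue_negligible M ->
  lebesgue_negligible (fun x => N x \/ M x).
Proof.
move=> hN hM; apply: negligibleS (negligibleU hN hM).
by move=> x [h|h]; [left|right].
Qed.

Lemma negligible_bigcup_nat (F : nat -> R -> Prop) :
  (forall n, lebesgue_negligible (F n)) ->
  lebesgue_negligible (fun x => exists n, F n x).
Proof.
move=> h; apply: negligibleS (negligible_bigcup h).
by move=> x [n hn]; exists n.
Qed.

Lemma negligible_not_full (N : R -> Prop) :
  lebesgue_negligible N -> exists x, ~ N x.
Proof.
move=> [A [mA A0 NA]]; apply: contrapT => hN.
have hA x : A x by apply: NA; apply: contrapT => h; apply: hN; exists x.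
have : (lebesgue_measure (`[0%R, 1%R]%classic : set R) <= lebesgue_measure A)%E.
  by apply: le_measure; rewrite ?inE.
by rewrite A0 lebesgue_measure_itv /= lte_fin ltr01 oppr0 adde0 lee_fin ler10.
Qed.

End Negligible.

Module WellOrder.
Import all_boot all_classical Rstruct wochoice.

Lemma well_ordering_R : exists lt : R -> R -> Prop, well_founded lt /\
  (forall x y, x <> y -> lt x y \/ lt y x) /\
  (forall x y z, lt x y -> lt y z -> lt x z).
Proof.
have [le le_wo] := well_ordering_principle R.
have le_min (A : pred R) x : x \in A -> exists m, m \in A /\ forall y, y \in A -> le m y.
  by move=> Ax; have [m [[Am mlb] _]] := le_wo A (ex_intro _ x Ax); exists m.
have le_refl x : le x x.
  have [m [+ mlb]] := le_min (pred1 x) x (eqxx x).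
  by rewrite inE => /eqP em; subst m; apply: mlb; rewrite inE.
have le_anti x y : le x y -> le y x -> x = y.
  move=> lexy leyx; pose A := [pred t | (t == x) || (t == y)].
  have [m [_ mu]] := le_wo A (ex_intro _ x (introT orP (or_introl (eqxx x)))).
  have min_of z : z \in A -> le z x -> le z y -> minimum_of le A z.
    by move=> Az lezx lezy; split=> // t; rewrite inE => /orP [] /eqP ->.
  have Ax : x \in A by rewrite inE eqxx.
  have Ay : y \in A by rewrite inE eqxx orbT.
  by rewrite -(mu _ (min_of x Ax (le_refl x) lexy)) (mu _ (min_of y Ay leyx (le_refl y))).
exists (fun x y => le x y /\ x <> y); split; [|split].
- move=> a; apply: contrapT => na.
  pose A := [pred t | `[< ~ Acc (fun x y => le x y /\ x <> y) t >] ].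
  have [z [+ zlb]] := le_min A a (introT (asboolP _) na).
  rewrite inE => zA; apply: zA; constructor => y [leyz neyz].
  apply: contrapT => ny; apply: neyz; apply: le_anti => //.
  by apply: zlb; rewrite inE; exact: ny.
- move=> x y nexy; pose A := [pred t | (t == x) || (t == y)].
  have [z [+ zlb]] := le_min A x (introT orP (or_introl (eqxx x))).
  rewrite inE => /orP [] /eqP ez; subst z.
  + by left; split => //; apply: zlb; rewrite inE eqxx orbT.
  + by right; split; [apply: zlb; rewrite inE eqxx | move=> e; apply: nexy].
- move=> x y z [lexy nexy] [leyz neyz].
  pose A := [pred t | [|| t == x, t == y | t == z]].
  have [m [+ mlb]] := le_min A x (introT or3P (Or31 _ _ (eqxx x))).
  rewrite inE => /or3P [] /eqP em; subst m.
  + split; first by apply: mlb; rewrite inE eqxx !orbT.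
    by move=> exz; subst z; apply: nexy; apply: le_anti.
  + by exfalso; apply: nexy; apply: le_anti => //; apply: mlb; rewrite inE eqxx.
  + by exfalso; apply: neyz; apply: le_anti => //; apply: mlb; rewrite inE eqxx orbT.
Qed.

End WellOrder.

Import Negligible WellOrder.

Definition enumerable (A : R -> Prop) : Prop :=
  exists g : nat -> R, forall x, A x -> exists n, g n = x.

Lemma countable_enumerable (A : R -> Prop) : countable A -> enumerable A.
Proof.
  intros [f hf].
  exists (fun n => epsilon (inhabits 0) (fun x => A x /\ f x = n)).
  intros x Ax. exists (f x).
  assert (h : exists y, A y /\ f y = f x) by (exists x; auto).
  destruct (epsilon_spec (inhabits 0) _ h) as [h1 h2].
  apply hf; auto.
Qed.

Lemma enumerable_countable (A : R -> Prop) : enumerable A -> countable A.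
Proof.
  intros [g hg].
  exists (fun x => epsilon (inhabits 0%nat) (fun n => g n = x)).
  intros x y Ax Ay e.
  rewrite <- (epsilon_spec (inhabits 0%nat) _ (hg x Ax)), e.
  exact (epsilon_spec (inhabits 0%nat) _ (hg y Ay)).
Qed.

Lemma enumerable_subset (A B : R -> Prop) :
  (forall x, A x -> B x) -> enumerable B -> enumerable A.
Proof. intros h [g hg]. exists g. intros x Ax. apply hg, h, Ax. Qed.

Lemma enumerable_singleton (a : R) : enumerable (fun z => z = a).
Proof. exists (fun _ => a). intros x ->. exists 0%nat. reflexivity. Qed.

Lemma enumerable_union (A B : R -> Prop) :
  enumerable A -> enumerable B -> enumerable (fun z => A z \/ B z).
Proof.
  intros [ga ha] [gb hb].
  exists (fun m => if Nat.even m then ga (Nat.div2 m) else gb (Nat.div2 m)).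
  intros z [Az|Bz].
  - destruct (ha z Az) as [n hn]. exists (2 * n)%nat.
    rewrite Nat.even_mul, Nat.div2_double. exact hn.
  - destruct (hb z Bz) as [n hn]. exists (S (2 * n))%nat.
    rewrite Nat.even_succ, Nat.odd_mul, Nat.div2_succ_double. exact hn.
Qed.

Lemma enumerable_indexed_union (I : R -> Prop) (A : R -> R -> Prop) :
  enumerable I -> (forall s, I s -> enumerable (A s)) ->
  enumerable (fun z => exists s, I s /\ A s z).
Proof.
  intros [gI hI] hA.
  set (G := fun s => epsilon (inhabits (fun _ : nat => 0))
              (fun g => forall x, A s x -> exists n, g n = x)).
  exists (fun m => let (i, j) := Cantor.of_nat m in G (gI i) j).
  intros z [s [Is Asz]].
  destruct (hI s Is) as [i hi].
  destruct (epsilon_spec (inhabits (fun _ : nat => 0)) _ (hA s Is) z Asz) as [j hj].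
  exists (Cantor.to_nat (i, j)). rewrite Cantor.cancel_of_to, hi. exact hj.
Qed.

Lemma enumerable_image (A : R -> Prop) (h : R -> R) :
  enumerable A -> enumerable (fun z => exists a, A a /\ z = h a).
Proof.
  intros [g hg]. exists (fun n => h (g n)). intros z [a [Aa ->]].
  destruct (hg a Aa) as [n hn]. exists n. rewrite hn. reflexivity.
Qed.

Lemma enumerable_sumset (A : R -> Prop) : enumerable A -> enumerable (sumset A).
Proof.
  intros hA.
  apply enumerable_subset with
    (B := fun z => exists a, A a /\ (fun a z => exists b, A b /\ z = a + b) a z).
  { intros z [a [b [Aa [Ab e]]]]. exists a. split; auto. exists b. auto. }
  apply enumerable_indexed_union; auto.
  intros a _. exact (enumerable_image A (fun b => a + b) hA).
Qed.

Lemma lebesgue_null_subset (N M : R -> Prop) :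
  (forall x, M x -> N x) -> lebesgue_null N -> lebesgue_null M.
Proof.
  intros h hN eps he. destruct (hN eps he) as [a [b [h1 [h2 h3]]]].
  exists a, b. split; [|split]; auto.
Qed.

Lemma lebesgue_null_reflect (N : R -> Prop) (p : R) :
  lebesgue_null N -> lebesgue_null (fun x => N (p - x)).
Proof.
  intros hN eps heps. destruct (hN eps heps) as [a [b [h1 [h2 h3]]]].
  exists (fun n => p - b n), (fun n => p - a n). split; [|split].
  - intros n. specialize (h1 n). lra.
  - intros x Nx. destruct (h2 _ Nx) as [n hn]. exists n. lra.
  - intros m. rewrite (sum_eq _ (fun n => b n - a n)); auto.
    intros. ring.
Qed.

Lemma sum_f_R0_geometric_half (eps : R) (m : nat) :
  sum_f_R0 (fun n => eps / 2 ^ (S n)) m = eps - eps / 2 ^ (S m).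
Proof.
  induction m.
  - simpl. field.
  - rewrite tech5, IHm. simpl. field. apply pow_nonzero. lra.
Qed.

Lemma enumerable_lebesgue_null (A : R -> Prop) : enumerable A -> lebesgue_null A.
Proof.
  intros [g hg] eps heps.
  assert (hp : forall n, 0 < eps / 2 ^ n).
  { intros n. apply Rdiv_lt_0_compat; auto. apply pow_lt. lra. }
  (* the n-th point gets an interval of length eps / 2^(n+1) *)
  exists (fun n => g n - eps / 2 ^ (S (S n))), (fun n => g n + eps / 2 ^ (S (S n))).
  split; [|split].
  - intros n. specialize (hp (S (S n))). lra.
  - intros x Ax. destruct (hg x Ax) as [n hn]. exists n. specialize (hp (S (S n))). lra.
  - intros m. rewrite (sum_eq _ (fun n => eps / 2 ^ (S n))).
    + rewrite sum_f_R0_geometric_half. specialize (hp (S m)). lra.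
    + intros i _. simpl. field. apply pow_nonzero. lra.
Qed.

Lemma negligible_indexed_union (I : R -> Prop) (N : R -> R -> Prop) :
  enumerable I -> (forall s, I s -> lebesgue_negligible (N s)) ->
  lebesgue_negligible (fun z => exists s, I s /\ N s z).
Proof.
  intros [gI hI] hN.
  apply negligible_subset with
    (M := fun z => exists n, (fun n z => I (gI n) /\ N (gI n) z) n z).
  { intros z [s [Is Nz]]. destruct (hI s Is) as [n <-]. exists n. auto. }
  apply negligible_bigcup_nat. intros n.
  destruct (classic (I (gI n))) as [h|h].
  - apply negligible_subset with (M := N (gI n)); [tauto | exact (hN _ h)].
  - apply negligible_subset with (M := fun _ => False); [tauto | exact negligible_empty].
Qed.

Lemma exists_half_pow_lt (e : R) : 0 < e -> exists N, (/ 2) ^ N < e.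
Proof.
  intros he.
  destruct (pow_lt_1_zero (/ 2) ltac:(rewrite Rabs_pos_eq; lra) e he) as [N hN].
  exists N. specialize (hN N (le_n N)).
  rewrite Rabs_pos_eq in hN; [exact hN | apply pow_le; lra].
Qed.

Section PerfectAvoidsSequence.
Variable P : R -> Prop.
Hypothesis hP : perfect_set P.
Variable x0 : R.
Hypothesis Px0 : P x0.
Variable g : nat -> R.

(* A pair [c] is a (centre, radius) ball about a point of [P]; step n shrinks the ball
   so that its closure misses [g n]. *)
Definition avoid_step (x r : R) (n : nat) (c : R * R) : Prop :=
  P (fst c) /\ Rabs (fst c - x) <= r / 2 /\
  0 < snd c /\ snd c <= r / 2 /\ snd c < Rabs (fst c - g n).

Lemma avoid_step_exists x r n : P x -> 0 < r -> exists c, avoid_step x r n c.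
Proof.
  intros Px hr.
  assert (hball : forall y, P y -> Rabs (y - x) <= r / 2 -> y <> g n ->
    exists c, avoid_step x r n c).
  { intros y Py hy hyg. assert (0 < Rabs (y - g n)) by (apply Rabs_pos_lt; lra).
    exists (y, Rmin (r / 2) (Rabs (y - g n) / 2)). unfold avoid_step; simpl.
    repeat split; auto.
    - apply Rmin_glb_lt; lra.
    - apply Rmin_l.
    - apply Rle_lt_trans with (Rabs (y - g n) / 2); [apply Rmin_r | lra]. }
  destruct (Req_dec x (g n)) as [e|ne].
  - destruct (proj2 hP x Px (r / 2) ltac:(lra)) as [y [Py [yx hy]]].
    apply (hball y Py); lra.
  - apply (hball x Px); [rewrite Rminus_diag, Rabs_R0; lra | exact ne].
Qed.

Fixpoint avoid_seq (n : nat) : R * R :=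
  match n with
  | O => (x0, 1)
  | S n => epsilon (inhabits (0, 0)) (avoid_step (fst (avoid_seq n)) (snd (avoid_seq n)) n)
  end.

Lemma avoid_seq_inv n :
  P (fst (avoid_seq n)) /\ 0 < snd (avoid_seq n) /\ snd (avoid_seq n) <= (/ 2) ^ n.
Proof.
  induction n as [|n [h1 [h2 h3]]].
  - simpl. repeat split; auto; lra.
  - simpl.
    destruct (epsilon_spec (inhabits (0, 0)) _ (avoid_step_exists _ _ n h1 h2))
      as [a [b [c [d e]]]].
    repeat split; auto. lra.
Qed.

Lemma avoid_seq_step n :
  avoid_step (fst (avoid_seq n)) (snd (avoid_seq n)) n (avoid_seq (S n)).
Proof.
  destruct (avoid_seq_inv n) as [h1 [h2 _]].
  exact (epsilon_spec (inhabits (0, 0)) _ (avoid_step_exists _ _ n h1 h2)).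
Qed.

Lemma avoid_seq_dist n m :
  Rabs (fst (avoid_seq (n + m)) - fst (avoid_seq n))
    <= snd (avoid_seq n) - snd (avoid_seq (n + m)).
Proof.
  induction m.
  - rewrite Nat.add_0_r, Rminus_diag, Rabs_R0. lra.
  - rewrite Nat.add_succ_r.
    destruct (avoid_seq_step (n + m)) as [_ [a [_ [b _]]]].
    replace (fst (avoid_seq (S (n + m))) - fst (avoid_seq n)) with
      ((fst (avoid_seq (S (n + m))) - fst (avoid_seq (n + m)))
       + (fst (avoid_seq (n + m)) - fst (avoid_seq n))) by ring.
    eapply Rle_trans; [apply Rabs_triang | lra].
Qed.

Lemma avoid_seq_dist_le n k :
  (n <= k)%nat -> Rabs (fst (avoid_seq k) - fst (avoid_seq n)) <= snd (avoid_seq n).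
Proof.
  intros h. replace k with (n + (k - n))%nat by lia.
  pose proof (avoid_seq_dist n (k - n)). pose proof (avoid_seq_inv (n + (k - n))). lra.
Qed.

Lemma avoid_seq_limit :
  exists L, forall n, Rabs (L - fst (avoid_seq n)) <= snd (avoid_seq n).
Proof.
  assert (hc : Cauchy_crit (fun n => fst (avoid_seq n))).
  { intros e he. destruct (exists_half_pow_lt (e / 2) ltac:(lra)) as [N hN]. exists N.
    intros n m hn hm. unfold R_dist.
    destruct (avoid_seq_inv N) as [_ [_ h3]].
    pose proof (avoid_seq_dist_le N n hn). pose proof (avoid_seq_dist_le N m hm).
    replace (fst (avoid_seq n) - fst (avoid_seq m)) with
      ((fst (avoid_seq n) - fst (avoid_seq N)) + - (fst (avoid_seq m) - fst (avoid_seq N)))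
      by ring.
    eapply Rle_lt_trans; [apply Rabs_triang | rewrite Rabs_Ropp; lra]. }
  destruct (R_complete _ hc) as [L hL]. exists L.
  intros n. apply Rnot_lt_le. intros hlt.
  destruct (hL (Rabs (L - fst (avoid_seq n)) - snd (avoid_seq n)) ltac:(lra)) as [N hN].
  set (k := Nat.max N n).
  specialize (hN k (Nat.le_max_l N n)). unfold R_dist in hN.
  pose proof (avoid_seq_dist_le n k (Nat.le_max_r N n)).
  pose proof (Rabs_triang (L - fst (avoid_seq k)) (fst (avoid_seq k) - fst (avoid_seq n))).
  replace (L - fst (avoid_seq k) + (fst (avoid_seq k) - fst (avoid_seq n)))
    with (L - fst (avoid_seq n)) in * by ring.
  rewrite Rabs_minus_sym in hN. lra.
Qed.

Lemma perfect_set_avoids_sequence : exists x, P x /\ forall n, x <> g n.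
Proof.
  destruct avoid_seq_limit as [L hL]. exists L. split.
  - apply (proj1 hP). intros e he.
    destruct (exists_half_pow_lt e he) as [N hN]. exists (fst (avoid_seq N)).
    destruct (avoid_seq_inv N) as [h1 [_ h3]]. split; auto.
    specialize (hL N). rewrite Rabs_minus_sym in hL. lra.
  - intros n e. destruct (avoid_seq_step n) as [_ [_ [_ [_ h]]]].
    specialize (hL (S n)). rewrite e, Rabs_minus_sym in hL. lra.
Qed.

End PerfectAvoidsSequence.

Lemma perfect_set_avoids_enumerable (P C : R -> Prop) :
  perfect_set P -> (exists x, P x) -> enumerable C -> exists x, P x /\ ~ C x.
Proof.
  intros hP [x0 Px0] [g hg].
  destruct (perfect_set_avoids_sequence P hP x0 Px0 g) as [x [Px hx]].
  exists x. split; auto. intros Cx. destruct (hg x Cx) as [n hn]. exact (hx n (eq_sym hn)).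
Qed.

Definition rat_enum (n : nat) : R :=
  let (i, m) := Cantor.of_nat n in
  let (u, v) := Cantor.of_nat i in (INR u - INR v) / INR (S m).

Lemma rat_enum_dense x y : x < y -> exists n, x < rat_enum n < y.
Proof.
  intros hxy. destruct (exists_inv_INR_lt (y - x) ltac:(lra)) as [m hm].
  set (K := INR (S m)) in *.
  assert (hK : 0 < K) by (apply lt_0_INR; lia).
  assert (hyx : y * K - x * K > 1).
  { replace (y * K - x * K) with ((y - x) * K) by ring.
    apply Rmult_lt_reg_r with (/ K); [apply Rinv_0_lt_compat; auto|].
    rewrite Rmult_assoc, Rinv_r by lra. lra. }
  set (z := up (x * K)).
  destruct (archimed (x * K)) as [h1 h2]. fold z in h1, h2.
  set (u := Z.to_nat z). set (v := Z.to_nat (- z)).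
  assert (hz : IZR z = INR u - INR v).
  { unfold u, v. rewrite !INR_IZR_INZ, <- minus_IZR. f_equal. lia. }
  exists (Cantor.to_nat (Cantor.to_nat (u, v), m)).
  unfold rat_enum. rewrite !Cantor.cancel_of_to, <- hz. fold K.
  assert (hK1 : / K * K = 1) by (field; lra).
  split; apply Rmult_lt_reg_r with K; auto; unfold Rdiv; rewrite Rmult_assoc, hK1; lra.
Qed.

Definition real_bits (x : R) (n : nat) : bool :=
  if Rlt_dec (rat_enum n) x then true else false.

Lemma real_bits_inj x y : real_bits x = real_bits y -> x = y.
Proof.
  intros e.
  assert (hlt : forall x y, x < y -> real_bits x <> real_bits y).
  { intros a b hab hbits. destruct (rat_enum_dense a b hab) as [n hn].
    assert (h : real_bits a n = real_bits b n) by (rewrite hbits; auto).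
    unfold real_bits in h.
    destruct (Rlt_dec (rat_enum n) a), (Rlt_dec (rat_enum n) b); try lra; discriminate. }
  destruct (Rtotal_order x y) as [h|[h|h]]; auto.
  - contradiction (hlt x y h).
  - contradiction (hlt y x h). auto.
Qed.

Fixpoint ternary_partial (s : nat -> bool) (n : nat) : R :=
  match n with
  | O => 0
  | S n => ternary_partial s n + (if s n then (/ 3) ^ n else 0)
  end.

Lemma inv3_pow_pos n : 0 < (/ 3) ^ n.
Proof. apply pow_lt. lra. Qed.

Lemma ternary_partial_step s n :
  ternary_partial s n <= ternary_partial s (S n) <= ternary_partial s n + (/ 3) ^ n.
Proof. simpl. pose proof (inv3_pow_pos n). destruct (s n); lra. Qed.

Lemma ternary_partial_bound s n : ternary_partial s n <= 3 / 2.
Proof.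
  enough (h : ternary_partial s n <= 3 / 2 - 3 / 2 * (/ 3) ^ n)
    by (pose proof (inv3_pow_pos n); lra).
  induction n.
  - simpl. lra.
  - pose proof (ternary_partial_step s n). simpl pow. lra.
Qed.

Lemma ternary_partial_mono s n m :
  (n <= m)%nat -> ternary_partial s n <= ternary_partial s m.
Proof.
  intros h. induction h; [lra|]. pose proof (ternary_partial_step s m). lra.
Qed.

Lemma ternary_partial_tail s k m :
  ternary_partial s (S k + m)
    <= ternary_partial s (S k) + (/ 3) ^ k / 2 - (/ 3) ^ (k + m) / 2.
Proof.
  induction m.
  - rewrite !Nat.add_0_r. lra.
  - rewrite Nat.add_succ_r. pose proof (ternary_partial_step s (S k + m)).
    replace (S k + m)%nat with (S (k + m)) in * by lia.
    replace (k + S m)%nat with (S (k + m)) by lia.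
    simpl pow in *. lra.
Qed.

Lemma ternary_partial_agree s t k :
  (forall i, (i < k)%nat -> s i = t i) -> ternary_partial s k = ternary_partial t k.
Proof.
  induction k; intros h; simpl; auto.
  rewrite IHk by (intros; apply h; lia). rewrite (h k) by lia. reflexivity.
Qed.

Lemma ternary_partial_growing s : Un_growing (ternary_partial s).
Proof. intros n. apply ternary_partial_step. Qed.

Lemma ternary_partial_has_ub s : has_ub (ternary_partial s).
Proof. exists (3 / 2). intros x [n ->]. apply ternary_partial_bound. Qed.

Definition ternary (s : nat -> bool) : R :=
  proj1_sig (growing_cv _ (ternary_partial_growing s) (ternary_partial_has_ub s)).

Lemma ternary_ge s n : ternary_partial s n <= ternary s.
Proof.
  unfold ternary.
  destruct (growing_cv _ (ternary_partial_growing s) (ternary_partial_has_ub s)) as [l hl].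
  exact (growing_ineq _ _ (ternary_partial_growing s) hl n).
Qed.

Lemma ternary_le s B : (forall n, ternary_partial s n <= B) -> ternary s <= B.
Proof.
  intros hB. unfold ternary.
  destruct (growing_cv _ (ternary_partial_growing s) (ternary_partial_has_ub s)) as [l hl].
  simpl. apply Rnot_lt_le. intros hlt. destruct (hl (l - B) ltac:(lra)) as [N hN].
  specialize (hN N (le_n N)). specialize (hB N). unfold R_dist in hN.
  rewrite Rabs_minus_sym in hN. pose proof (Rle_abs (l - ternary_partial s N)). lra.
Qed.

Lemma ternary_first_diff s t k :
  (forall i, (i < k)%nat -> s i = t i) -> s k = true -> t k = false ->
  ternary t < ternary s.
Proof.
  intros ha hs ht.
  assert (e1 : ternary_partial s (S k) = ternary_partial s k + (/ 3) ^ k)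
    by (simpl; rewrite hs; auto).
  assert (e2 : ternary_partial t (S k) = ternary_partial t k) by (simpl; rewrite ht; lra).
  pose proof (ternary_partial_agree s t k ha).
  pose proof (ternary_ge s (S k)). pose proof (inv3_pow_pos k).
  assert (ternary t <= ternary_partial t k + (/ 3) ^ k / 2).
  { apply ternary_le. intros n.
    destruct (le_lt_dec n (S k)) as [h|h].
    - pose proof (ternary_partial_mono t n (S k) h). lra.
    - replace n with (S k + (n - S k))%nat by lia.
      pose proof (ternary_partial_tail t k (n - S k)).
      pose proof (inv3_pow_pos (k + (n - S k))). lra. }
  lra.
Qed.

Lemma exists_first_diff (s t : nat -> bool) k : s k <> t k ->
  exists k', s k' <> t k' /\ forall i, (i < k')%nat -> s i = t i.
Proof.
  induction k as [k IH] using lt_wf_ind. intros h.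
  destruct (classic (forall i, (i < k)%nat -> s i = t i)) as [a|a].
  - exists k. auto.
  - apply not_all_ex_not in a. destruct a as [i hi].
    apply imply_to_and in hi. destruct hi as [hi1 hi2].
    exact (IH i hi1 hi2).
Qed.

Lemma ternary_inj s t : ternary s = ternary t -> s = t.
Proof.
  intros e. apply functional_extensionality. intros k. apply NNPP. intros hk.
  destruct (exists_first_diff s t k hk) as [k' [h1 h2]].
  destruct (s k') eqn:es, (t k') eqn:et; try congruence.
  - pose proof (ternary_first_diff s t k' h2 es et). lra.
  - assert (h3 : forall i, (i < k')%nat -> t i = s i) by (intros; symmetry; auto).
    pose proof (ternary_first_diff t s k' h3 et es). lra.
Qed.

Definition code := nat -> R.

Definition code_bits (t : code) (m : nat) : bool :=
  let (i, j) := Cantor.of_nat m in real_bits (t i) j.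

Lemma code_bits_inj t t' : code_bits t = code_bits t' -> t = t'.
Proof.
  intros e. apply functional_extensionality. intros i. apply real_bits_inj.
  apply functional_extensionality. intros j.
  assert (h : code_bits t (Cantor.to_nat (i, j)) = code_bits t' (Cantor.to_nat (i, j)))
    by (rewrite e; auto).
  unfold code_bits in h. rewrite Cantor.cancel_of_to in h. exact h.
Qed.

Definition decode (r : R) : code :=
  epsilon (inhabits (fun _ => 0)) (fun t => ternary (code_bits t) = r).

Lemma decode_surj t : exists r, decode r = t.
Proof.
  exists (ternary (code_bits t)). apply code_bits_inj, ternary_inj.
  exact (epsilon_spec (inhabits (fun _ : nat => 0))
    (fun t' => ternary (code_bits t') = ternary (code_bits t)) (ex_intro _ t eq_refl)).
Qed.

Definition pair_nat (k n : nat) : nat := Cantor.to_nat (k, n).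

(* A code describes a null set by, for each k, an interval cover of total length at
   most 1/(k+1), and a closed set by a sequence of open intervals forming its complement. *)
Definition cover_lo (t : code) k n := t (pair_nat 0 (pair_nat k n)).
Definition cover_hi (t : code) k n := t (pair_nat 1 (pair_nat k n)).
Definition gap_lo (t : code) n := t (pair_nat 2 n).
Definition gap_hi (t : code) n := t (pair_nat 3 n).

Definition valid_null_code (t : code) : Prop :=
  forall k, (forall n, cover_lo t k n <= cover_hi t k n) /\
  forall m, sum_f_R0 (fun n => cover_hi t k n - cover_lo t k n) m <= / INR (S k).

Definition coded_null (t : code) (x : R) : Prop :=
  valid_null_code t /\ forall k, exists n, cover_lo t k n < x < cover_hi t k n.

Definition coded_closed (t : code) (x : R) : Prop :=
  forall n, ~ (gap_lo t n < x < gap_hi t n).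

Definition make_code (a b : nat -> nat -> R) (p q : nat -> R) : code := fun m =>
  let (i, j) := Cantor.of_nat m in
  match i with
  | O => let (k, n) := Cantor.of_nat j in a k n
  | S O => let (k, n) := Cantor.of_nat j in b k n
  | S (S O) => p j
  | _ => q j
  end.

Lemma cover_lo_make a b p q k n : cover_lo (make_code a b p q) k n = a k n.
Proof. unfold cover_lo, make_code, pair_nat. rewrite !Cantor.cancel_of_to. reflexivity. Qed.
Lemma cover_hi_make a b p q k n : cover_hi (make_code a b p q) k n = b k n.
Proof. unfold cover_hi, make_code, pair_nat. rewrite !Cantor.cancel_of_to. reflexivity. Qed.
Lemma gap_lo_make a b p q n : gap_lo (make_code a b p q) n = p n.
Proof. unfold gap_lo, make_code, pair_nat. rewrite !Cantor.cancel_of_to. reflexivity. Qed.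
Lemma gap_hi_make a b p q n : gap_hi (make_code a b p q) n = q n.
Proof. unfold gap_hi, make_code, pair_nat. rewrite !Cantor.cancel_of_to. reflexivity. Qed.

Lemma coded_null_lebesgue_null t : lebesgue_null (coded_null t).
Proof.
  destruct (classic (valid_null_code t)) as [hv|hv].
  - intros eps he. destruct (exists_inv_INR_lt eps he) as [m hm].
    exists (cover_lo t m), (cover_hi t m). destruct (hv m) as [h1 h2].
    split; [|split]; auto.
    + intros x [_ hx]. apply hx.
    + intros k. specialize (h2 k). lra.
  - apply lebesgue_null_subset with (N := fun _ => False); [intros x [h _]; contradiction|].
    apply enumerable_lebesgue_null. exists (fun _ => 0). intros x [].
Qed.

Lemma lebesgue_null_coded (N : R -> Prop) :
  lebesgue_null N -> exists t, forall x, N x -> coded_null t x.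
Proof.
  intros hN.
  set (cover k (ab : (nat -> R) * (nat -> R)) :=
    (forall n, fst ab n <= snd ab n) /\
    (forall x, N x -> exists n, fst ab n < x < snd ab n) /\
    (forall m, sum_f_R0 (fun n => snd ab n - fst ab n) m <= / INR (S k))).
  assert (hex : forall k, exists ab, cover k ab).
  { intros k. assert (0 < / INR (S k)) by (apply Rinv_0_lt_compat, lt_0_INR; lia).
    destruct (hN _ H) as [a [b h]]. exists (a, b). exact h. }
  set (ab k := epsilon (inhabits ((fun _ : nat => 0), (fun _ : nat => 0))) (cover k)).
  assert (hab : forall k, cover k (ab k)) by (intros k; apply epsilon_spec, hex).
  exists (make_code (fun k n => fst (ab k) n) (fun k n => snd (ab k) n)
                    (fun _ => 0) (fun _ => 0)).
  intros x Nx. split.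
  - intros k. destruct (hab k) as [h1 [_ h3]]. split.
    + intros n. rewrite cover_lo_make, cover_hi_make. auto.
    + intros m. rewrite (sum_eq _ (fun n => snd (ab k) n - fst (ab k) n)); auto.
      intros. rewrite cover_lo_make, cover_hi_make. reflexivity.
  - intros k. destruct (hab k) as [_ [h2 _]]. destruct (h2 x Nx) as [n hn].
    exists n. rewrite cover_lo_make, cover_hi_make. exact hn.
Qed.

Lemma closed_set_isolated_complement (P : R -> Prop) (x : R) :
  closed_set P -> ~ P x -> exists e, 0 < e /\ forall y, P y -> e <= Rabs (y - x).
Proof.
  intros hP nP. apply NNPP. intros hne. apply nP, (hP x). intros e he.
  apply NNPP. intros hy. apply hne. exists e. split; auto.
  intros y Py. apply Rnot_lt_le. intros hlt. apply hy. exists y. auto.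
Qed.

(* The complement of a closed set is the union of the rational intervals it contains. *)
Lemma closed_set_coded (P : R -> Prop) :
  closed_set P -> exists t, forall x, P x <-> coded_closed t x.
Proof.
  intros hP.
  set (gap n := let (i, j) := Cantor.of_nat n in
                forall z, rat_enum i < z < rat_enum j -> ~ P z).
  set (p n := if excluded_middle_informative (gap n)
              then rat_enum (fst (Cantor.of_nat n)) else 0).
  set (q n := if excluded_middle_informative (gap n)
              then rat_enum (snd (Cantor.of_nat n)) else 0).
  exists (make_code (fun _ _ => 0) (fun _ _ => 0) p q). intros x. split.
  - intros Px n. rewrite gap_lo_make, gap_hi_make. unfold p, q.
    destruct (excluded_middle_informative (gap n)) as [g|g]; [|lra].
    unfold gap in g. destruct (Cantor.of_nat n) as [i j]. simpl. intros hz. exact (g x hz Px).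
  - intros hx. apply NNPP. intros nP.
    destruct (closed_set_isolated_complement P x hP nP) as [e [he hy]].
    destruct (rat_enum_dense (x - e) x ltac:(lra)) as [i hi].
    destruct (rat_enum_dense x (x + e) ltac:(lra)) as [j hj].
    assert (g : gap (Cantor.to_nat (i, j))).
    { unfold gap. rewrite Cantor.cancel_of_to. intros z hz Pz. specialize (hy z Pz).
      unfold Rabs in hy. destruct (Rcase_abs (z - x)); lra. }
    apply (hx (Cantor.to_nat (i, j))). rewrite gap_lo_make, gap_hi_make. unfold p, q.
    destruct (excluded_middle_informative (gap (Cantor.to_nat (i, j)))); [|contradiction].
    rewrite Cantor.cancel_of_to. simpl. lra.
Qed.

Lemma CH_well_order : CH -> exists lt : R -> R -> Prop, well_founded lt /\
  (forall x y, x <> y -> lt x y \/ lt y x) /\ (forall x y z, lt x y -> lt y z -> lt x z) /\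
  forall x, enumerable (fun y => lt y x).
Proof.
  intros hCH.
  destruct well_ordering_R as [lt0 [wf0 [tot0 tr0]]].
  destruct (classic (forall x, countable (fun y => lt0 y x))) as [hc|hc].
  { exists lt0. split; [exact wf0|]. split; [exact tot0|]. split; [exact tr0|].
    intros x. apply countable_enumerable, hc. }
  (* Otherwise restrict to the least point with uncountably many predecessors, and
     transport the order along the bijection with R given by CH. *)
  apply not_all_ex_not in hc. destruct hc as [x1 hx1].
  assert (hmin : exists x0, ~ countable (fun y => lt0 y x0) /\
      forall y, lt0 y x0 -> countable (fun z => lt0 z y)).
  { induction x1 as [x IH] using (well_founded_ind wf0).
    destruct (classic (forall y, lt0 y x -> countable (fun z => lt0 z y))) as [h|h].
    - exists x. auto.
    - apply not_all_ex_not in h. destruct h as [y hy]. apply imply_to_and in hy.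
      exact (IH y (proj1 hy) (proj2 hy)). }
  destruct hmin as [x0 [hx0 hsm]].
  destruct (hCH (fun y => lt0 y x0)) as [hcnt|[g [hg1 [hg2 _]]]]; [contradiction|].
  exists (fun r s => lt0 (g r) (g s)). split; [|split; [|split]].
  - apply wf_inverse_image. exact wf0.
  - intros x y ne. apply tot0. intros e. apply ne, hg2, e.
  - intros x y z h1 h2. eapply tr0; eauto.
  - intros s. apply countable_enumerable.
    destruct (hsm (g s) (hg1 s)) as [f hf].
    exists (fun r => f (g r)). intros x y hx hy e. apply hg2, hf; auto.
Qed.

Definition adjoin2 (S0 : R -> Prop) (x y a : R) : Prop := S0 a \/ a = x \/ a = y.

(* The offsets [x] for which adding [x] and [p - x] to [S0] would make [q] or an
   element of [Q0] a sum of two points. *)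
Definition forbidden_offset (S0 Q0 : R -> Prop) (p q x : R) : Prop :=
  exists q', (Q0 q' \/ q' = q) /\
    ((exists a, S0 a /\ (x = q' - a \/ x = p + a - q')) \/ x = q' / 2 \/ x = p - q' / 2).

Lemma forbidden_offset_enumerable (S0 Q0 : R -> Prop) (p q : R) :
  enumerable S0 -> enumerable Q0 -> enumerable (forbidden_offset S0 Q0 p q).
Proof.
  intros hS hQ. apply enumerable_indexed_union.
  { apply enumerable_union; [exact hQ | apply enumerable_singleton]. }
  intros q' _.
  apply enumerable_subset with (B := fun z =>
    ((exists a, S0 a /\ z = q' - a) \/ (exists a, S0 a /\ z = p + a - q'))
    \/ (z = q' / 2 \/ z = p - q' / 2)).
  { intros z [[a [ha [h|h]]]|[h|h]]; [left; left|left; right|right; left|right; right]; eauto. }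
  repeat apply enumerable_union; try apply enumerable_singleton.
  - exact (enumerable_image S0 (fun a => q' - a) hS).
  - exact (enumerable_image S0 (fun a => p + a - q') hS).
Qed.

Lemma adjoin2_sums_avoid (S0 Q0 : R -> Prop) (p q x : R) :
  ~ sumset S0 q -> ~ (Q0 p \/ p = q) -> ~ forbidden_offset S0 Q0 p q x ->
  ~ sumset (adjoin2 S0 x (p - x)) q /\
  forall q', Q0 q' -> forall a, adjoin2 S0 x (p - x) a ->
    q' <> x + a /\ q' <> (p - x) + a.
Proof.
  intros nq np nx.
  assert (hS : forall q', Q0 q' \/ q' = q -> forall a, S0 a ->
      x <> q' - a /\ x <> p + a - q').
  { intros q' hq' a ha. split; intros e; apply nx; exists q'; split; auto; left; eauto. }
  assert (hhalf : forall q', Q0 q' \/ q' = q -> x <> q' / 2 /\ x <> p - q' / 2).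
  { intros q' hq'. split; intros e; apply nx; exists q'; split; auto; right; auto. }
  split.
  - intros [a [b [ha [hb e]]]].
    destruct (hhalf q (or_intror eq_refl)) as [h1 h2].
    destruct ha as [ha|[->| ->]], hb as [hb|[->| ->]].
    + apply nq. exists a, b. auto.
    + apply (proj1 (hS q (or_intror eq_refl) a ha)). lra.
    + apply (proj2 (hS q (or_intror eq_refl) a ha)). lra.
    + apply (proj1 (hS q (or_intror eq_refl) b hb)). lra.
    + apply h1. lra.
    + apply np. right. lra.
    + apply (proj2 (hS q (or_intror eq_refl) b hb)). lra.
    + apply np. right. lra.
    + apply h2. lra.
  - intros q' hq' a ha.
    destruct (hhalf q' (or_introl hq')) as [h1 h2].
    assert (hpq : q' <> p) by (intros <-; apply np; left; exact hq').
    destruct ha as [ha|[->| ->]].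
    + destruct (hS q' (or_introl hq') a ha) as [h3 h4]. split; intros e; lra.
    + split; intros e; lra.
    + split; intros e; lra.
Qed.

Definition valid_extension (I : R -> Prop) (N : R -> R -> Prop) (P S0 Q0 : R -> Prop)
    (x y q : R) : Prop :=
  (forall s, I s -> ~ N s x /\ ~ N s y) /\ P q /\ P (x + y) /\
  ~ sumset (adjoin2 S0 x y) q /\
  (forall q', Q0 q' -> forall a, adjoin2 S0 x y a -> q' <> x + a /\ q' <> y + a).

Lemma valid_extension_exists (I : R -> Prop) (N : R -> R -> Prop) (P S0 Q0 : R -> Prop) :
  enumerable I -> (forall s, I s -> lebesgue_null (N s)) ->
  perfect_set P -> (exists w, P w) -> enumerable S0 -> enumerable Q0 ->
  exists x y q, valid_extension I N P S0 Q0 x y q.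
Proof.
  intros hI hN hP hne hS hQ.
  destruct (perfect_set_avoids_enumerable P (sumset S0) hP hne (enumerable_sumset S0 hS))
    as [q [Pq nq]].
  destruct (perfect_set_avoids_enumerable P (fun z => Q0 z \/ z = q) hP hne
    (enumerable_union _ _ hQ (enumerable_singleton q))) as [p [Pp np]].
  (* x must avoid every null set, and so must y = p - x *)
  assert (hbad : lebesgue_negligible (fun x =>
    ((exists s, I s /\ N s x) \/ (exists s, I s /\ N s (p - x)))
    \/ forbidden_offset S0 Q0 p q x)).
  { repeat apply negligible_union.
    - apply negligible_indexed_union; auto.
      intros s hs. exact (lebesgue_null_negligible _ (hN s hs)).
    - apply negligible_indexed_union with (N := fun s x => N s (p - x)); auto.
      intros s hs. exact (lebesgue_null_negligible _ (lebesgue_null_reflect _ p (hN s hs))).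
    - apply lebesgue_null_negligible, enumerable_lebesgue_null.
      exact (forbidden_offset_enumerable S0 Q0 p q hS hQ). }
  destruct (negligible_not_full _ hbad) as [x hx].
  destruct (adjoin2_sums_avoid S0 Q0 p q x nq np ltac:(tauto)) as [hq hq'].
  exists x, (p - x), q. split; [|split; [exact Pq | split; [|split; assumption]]].
  - intros s hs. split; intros h; apply hx; left; [left | right]; exists s; auto.
  - replace (x + (p - x)) with p by ring. exact Pp.
Qed.

Lemma perfect_set_ext (P Q : R -> Prop) :
  (forall x, P x <-> Q x) -> perfect_set P -> perfect_set Q.
Proof.
  intros h [hc hn]. split.
  - intros x hx. apply h, hc. intros e he. destruct (hx e he) as [y [Qy hy]].
    exists y. split; auto. apply h; auto.
  - intros x Qx e he. destruct (hn x (proj2 (h x) Qx) e he) as [y [Py hy]].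
    exists y. split; auto. apply h; auto.
Qed.

Lemma perfect_set_full : perfect_set (fun _ => True).
Proof.
  split; [intros x _; exact I|].
  intros x _ e he. exists (x + e / 2). split; [exact I | split; [lra|]].
  replace (x + e / 2 - x) with (e / 2) by ring. rewrite Rabs_pos_eq; lra.
Qed.

Section TransfiniteConstruction.
Variable lt : R -> R -> Prop.
Hypothesis lt_wf : well_founded lt.
Hypothesis lt_total : forall x y, x <> y -> lt x y \/ lt y x.
Hypothesis lt_trans : forall x y z, lt x y -> lt y z -> lt x z.
Hypothesis lt_enumerable : forall x, enumerable (fun y => lt y x).

Record stage := Stage { stage_x : R; stage_y : R; stage_out : R }.

(* The set that stage r must meet; when the r-th code describes no nonempty perfect
   set this is all of R, so the requirement is void. *)
Definition target (r z : R) : Prop :=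
  (perfect_set (coded_closed (decode r)) /\ exists w, coded_closed (decode r) w) ->
  coded_closed (decode r) z.

Lemma target_perfect r : perfect_set (target r) /\ exists w, target r w.
Proof.
  destruct (classic (perfect_set (coded_closed (decode r)) /\
                     exists w, coded_closed (decode r) w)) as [h|h].
  - split.
    + apply perfect_set_ext with (P := coded_closed (decode r)); [|apply h].
      intros x. unfold target. tauto.
    + destruct h as [_ [w hw]]. exists w. intros _. exact hw.
  - split.
    + apply perfect_set_ext with (P := fun _ => True); [|exact perfect_set_full].
      intros x. unfold target. tauto.
    + exists 0. intros h'. contradiction.
Qed.

Definition earlier_points (r : R) (k : R -> stage) (a : R) : Prop :=
  exists s, lt s r /\ (a = stage_x (k s) \/ a = stage_y (k s)).

Definition earlier_outs (r : R) (k : R -> stage) (a : R) : Prop :=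
  exists s, lt s r /\ a = stage_out (k s).

Definition good_stage (r : R) (k : R -> stage) (v : stage) : Prop :=
  valid_extension (fun s => lt s r \/ s = r) (fun s => coded_null (decode s)) (target r)
    (earlier_points r k) (earlier_outs r k) (stage_x v) (stage_y v) (stage_out v).

Lemma earlier_points_enumerable r k : enumerable (earlier_points r k).
Proof.
  apply enumerable_indexed_union with
    (A := fun s a => a = stage_x (k s) \/ a = stage_y (k s)); [apply lt_enumerable|].
  intros s _. apply enumerable_union; apply enumerable_singleton.
Qed.

Lemma earlier_outs_enumerable r k : enumerable (earlier_outs r k).
Proof.
  apply enumerable_indexed_union with (A := fun s a => a = stage_out (k s));
    [apply lt_enumerable|].
  intros s _. apply enumerable_singleton.
Qed.

Lemma good_stage_exists r k : exists v, good_stage r k v.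
Proof.
  destruct (target_perfect r) as [hP hne].
  destruct (valid_extension_exists (fun s => lt s r \/ s = r)
    (fun s => coded_null (decode s)) (target r) (earlier_points r k) (earlier_outs r k))
    as [x [y [q h]]]; auto.
  - apply enumerable_union; [apply lt_enumerable | apply enumerable_singleton].
  - intros s _. apply coded_null_lebesgue_null.
  - apply earlier_points_enumerable.
  - apply earlier_outs_enumerable.
  - exists (Stage x y q). exact h.
Qed.

Definition restrict (r : R) (h : forall s, lt s r -> stage) (s : R) : stage :=
  match excluded_middle_informative (lt s r) with
  | left H => h s H
  | right _ => Stage 0 0 0
  end.

Definition choose_stage (r : R) (h : forall s, lt s r -> stage) : stage :=
  epsilon (inhabits (Stage 0 0 0)) (good_stage r (restrict r h)).

Definition construction : R -> stage := Fix lt_wf (fun _ => stage) choose_stage.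

Lemma construction_eq r : construction r = choose_stage r (fun s _ => construction s).
Proof.
  apply (Fix_eq lt_wf (fun _ => stage) choose_stage).
  intros x f g hfg. unfold choose_stage.
  replace (restrict x f) with (restrict x g); auto.
  apply functional_extensionality. intros s. unfold restrict.
  destruct (excluded_middle_informative (lt s x)); auto.
Qed.

Lemma good_stage_local r k k' :
  (forall s, lt s r -> k s = k' s) -> good_stage r k = good_stage r k'.
Proof.
  intros h.
  assert (ep : earlier_points r k = earlier_points r k').
  { apply functional_extensionality. intros a. apply propositional_extensionality.
    unfold earlier_points. split; intros [s [hs e]]; exists s; rewrite ?(h s hs) in *; auto. }
  assert (eo : earlier_outs r k = earlier_outs r k').
  { apply functional_extensionality. intros a. apply propositional_extensionality.
    unfold earlier_outs. split; intros [s [hs e]]; exists s; rewrite ?(h s hs) in *; auto. }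
  unfold good_stage. rewrite ep, eo. reflexivity.
Qed.

Lemma construction_good r : good_stage r construction (construction r).
Proof.
  rewrite construction_eq. unfold choose_stage.
  rewrite (good_stage_local r construction (restrict r (fun s _ => construction s))).
  - apply epsilon_spec, good_stage_exists.
  - intros s hs. unfold restrict.
    destruct (excluded_middle_informative (lt s r)); [reflexivity | contradiction].
Qed.


Definition construction_points (z : R) : Prop :=
  exists r, z = stage_x (construction r) \/ z = stage_y (construction r).

Lemma construction_points_null_countable (N : R -> Prop) :
  lebesgue_null N -> countable (fun x => construction_points x /\ N x).
Proof.
  intros hN. destruct (lebesgue_null_coded N hN) as [t ht].
  destruct (decode_surj t) as [r0 <-].
  apply enumerable_countable.
  apply enumerable_subset with (B := earlier_points r0 construction);
    [|apply earlier_points_enumerable].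
  (* stages r >= r0 avoid the r0-th null set *)
  intros z [[r hz] Nz]. exists r. split; [|exact hz].
  destruct (classic (lt r r0)) as [l|nl]; [exact l|]. exfalso.
  assert (hr0 : lt r0 r \/ r0 = r).
  { destruct (classic (r0 = r)) as [e|ne]; [now right|].
    destruct (lt_total r0 r ne); [now left | contradiction]. }
  destruct (proj1 (construction_good r) r0 hr0) as [n1 n2].
  destruct hz as [->| ->]; auto.
Qed.

Lemma construction_points_uncountable : ~ countable construction_points.
Proof.
  intros hc.
  destruct (lebesgue_null_coded construction_points
    (enumerable_lebesgue_null _ (countable_enumerable _ hc))) as [t ht].
  destruct (decode_surj t) as [r0 hr0].
  destruct (proj1 (construction_good r0) r0 (or_intror eq_refl)) as [n1 _].
  apply n1. rewrite hr0. apply ht. exists r0. now left.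
Qed.

Lemma earlier_or_current_point r m a :
  (lt r m \/ r = m) -> (a = stage_x (construction r) \/ a = stage_y (construction r)) ->
  adjoin2 (earlier_points m construction)
    (stage_x (construction m)) (stage_y (construction m)) a.
Proof.
  intros [l| <-] ha.
  - left. exists r. auto.
  - right. exact ha.
Qed.

(* If q_r = a + b with a, b added at stages r1, r2, the later of r, r1, r2 forbids it. *)
Lemma stage_out_not_sum r : ~ sumset construction_points (stage_out (construction r)).
Proof.
  intros [a [b [[r1 ha] [[r2 hb] e]]]].
  assert (hmax : exists m, (m = r1 \/ m = r2) /\ (lt r1 m \/ r1 = m) /\ (lt r2 m \/ r2 = m)).
  { destruct (classic (r1 = r2)) as [<-|ne]; [exists r1; auto|].
    destruct (lt_total r1 r2 ne); [exists r2 | exists r1]; auto. }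
  destruct hmax as [m [hm [h1 h2]]].
  destruct (classic (lt r m)) as [lrm|nlrm].
  - destruct (construction_good m) as [_ [_ [_ [_ hout]]]].
    assert (hq : earlier_outs m construction (stage_out (construction r)))
      by (exists r; auto).
    destruct hm as [-> | ->].
    + destruct (hout _ hq b (earlier_or_current_point r2 r1 b h2 hb)) as [n1 n2].
      destruct ha as [->| ->]; contradiction.
    + destruct (hout _ hq a (earlier_or_current_point r1 r2 a h1 ha)) as [n1 n2].
      rewrite Rplus_comm in e. destruct hb as [->| ->]; contradiction.
  - assert (hle : forall s, lt s m \/ s = m -> lt s r \/ s = r).
    { intros s hs. destruct (classic (m = r)) as [<-|nem]; [exact hs|].
      destruct (lt_total m r nem) as [l|l]; [|contradiction].
      left. destruct hs as [hs| ->]; [eapply lt_trans; eauto | exact l]. }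
    destruct (construction_good r) as [_ [_ [_ [hnot _]]]].
    apply hnot. exists a, b.
    split; [apply earlier_or_current_point with r1; auto|].
    split; [apply earlier_or_current_point with r2; auto | exact e].
Qed.

Lemma construction_sumset_bernstein : bernstein_set (sumset construction_points).
Proof.
  intros P hP hne.
  destruct (closed_set_coded P (proj1 hP)) as [t ht].
  destruct (decode_surj t) as [r hr].
  assert (hPr : perfect_set (coded_closed (decode r)) /\ exists w, coded_closed (decode r) w).
  { rewrite hr. split.
    - apply perfect_set_ext with (P := P); auto.
    - destruct hne as [w hw]. exists w. apply ht. exact hw. }
  destruct (construction_good r) as [_ [hq [hp _]]].
  split.
  - exists (stage_x (construction r) + stage_y (construction r)). split.
    + apply ht. rewrite <- hr. exact (hp hPr).
    + exists (stage_x (construction r)), (stage_y (construction r)).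
      split; [exists r; auto | split; [exists r; auto | reflexivity]].
  - exists (stage_out (construction r)). split.
    + apply ht. rewrite <- hr. exact (hq hPr).
    + apply stage_out_not_sum.
Qed.

End TransfiniteConstruction.

Theorem mainTheorem18 :
  CH -> exists S : R -> Prop, sierpinski_set S /\ bernstein_set (sumset S).
Proof.
  intros hCH. destruct (CH_well_order hCH) as [lt [wf [tot [tr en]]]].
  exists (construction_points lt wf). split; [split|].
  - destruct (hCH (construction_points lt wf)) as [h|h]; [|exact h].
    contradiction (construction_points_uncountable lt wf en h).
  - exact (construction_points_null_countable lt wf tot en).
  - exact (construction_sumset_bernstein lt wf tot tr en).
Qed.
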